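(* Let $G$ be a quiver without multiple connections with $n \geq 1$ vertices, let $\lambda_1 \leq \cdots \leq \lambda_n$ be the eigenvalues of its Kirchhoff matrix $K$ (with multiplicity), and let $d_1 \leq \cdots \leq d_n$ be its vertex degrees in increasing order. Then $\lambda_k \geq d_k - (n-k)$ for all $1 \leq k \leq n$.
   Context: A quiver $G=(V,E)$ consists of a finite vertex set $V=\{1,\dots,n\}$ and a finite list (multiset) $E$ of pairs $(v,w)\in V\times V$; repeated edges and self-loops $(v,v)$ are allowed, and orientation of edges is irrelevant. ''Without multiple connections'' means that for any two distinct vertices $i\neq j$ there is at most one entry of $E$ equal to $(i,j)$ or $(j,i)$; any number of loops at a vertex is still allowed. The adjacency matrix $A$ is the symmetric $n\times n$ matrix with zero diagonal whose entry $A_{ij}$ ($i\neq j$) is the number of entries of $E$ equal to $(i,j)$ or $(j,i)$. The degree $d(i)$ of vertex $i$ is the number of entries $(v,w)$ of $E$ (counted with multiplicity) with $v=i$ or $w=i$; a loop at $i$ contributes $1$. $B$ is the diagonal degree matrix and the Kirchhoff matrix is $K=B-A$. *)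

From HB Require Import structures.
From mathcomp Require Import all_boot all_order all_algebra.
From mathcomp Require Import reals.
Set Implicit Arguments. Unset Strict Implicit. Unset Printing Implicit Defensive.
Import Order.TTheory GRing.Theory Num.Theory.
Local Open Scope ring_scope.

(* A quiver on vertex set 'I_n is a list (multiset) of pairs of vertices.
   Loops (v,v) and repeated entries are allowed; orientation is irrelevant. *)
Definition quiver (n : nat) := seq ('I_n * 'I_n).

Definition nconn (n : nat) (E : quiver n) (i j : 'I_n) : nat :=
  count (fun e => (e == (i, j)) || (e == (j, i))) E.

Definition no_multiple_connections (n : nat) (E : quiver n) : Prop :=
  forall i j : 'I_n, i != j -> (nconn E i j <= 1)%N.

(* degree: number of entries (v,w) with v = i or w = i; a loop counts once *)
Definition degree (n : nat) (E : quiver n) (i : 'I_n) : nat :=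
  count (fun e => (e.1 == i) || (e.2 == i)) E.

Definition adjacency_mx (R : nzRingType) (n : nat) (E : quiver n) : 'M[R]_n :=
  \matrix_(i, j) (if i == j then 0 else (nconn E i j)%:R).

Definition degree_mx (R : nzRingType) (n : nat) (E : quiver n) : 'M[R]_n :=
  \matrix_(i, j) (if i == j then (degree E i)%:R else 0).

Definition kirchhoff_mx (R : nzRingType) (n : nat) (E : quiver n) : 'M[R]_n :=
  degree_mx R E - adjacency_mx R E.

(* degrees sorted increasingly: d_1 <= ... <= d_n (0-indexed) *)
Definition sorted_degrees (n : nat) (E : quiver n) : seq nat :=
  sort leq [seq degree E i | i <- enum 'I_n].

Definition sorted_eigenvalues (R : realType) (n : nat) (M : 'M[R]_n) (s : seq R) : Prop :=
  sorted <=%R s /\ char_poly M = \prod_(x <- s) ('X - x%:P).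

From HB Require Import structures.
From mathcomp Require Import all_boot all_order all_algebra.
From mathcomp Require Import reals ring zify.
From mathcomp Require Import complex spectral sesquilinear.
Import Order.TTheory GRing.Theory Num.Theory.
Local Open Scope ring_scope.
Local Open Scope sesquilinear_scope.
Set Implicit Arguments. Unset Strict Implicit.

(* Suppose [lam_k < c := d_k - (n - k - 1)].  Diagonalising [K] by a unitary
   matrix, the eigenvectors for eigenvalues [< c] span a space of dimension at
   least [k + 1], whereas the vectors supported on a set [S] of [n - k] vertices
   of degree [>= d_k] form a space of dimension [n - k]; hence some [v <> 0]
   lies in both.  On the first space [v* K v < c |v|^2].  On the second, every
   vertex of [S] has at most [|S| - 1] neighbours in [S] (there are no multiple
   connections), so the adjacency part satisfies the Gershgorin-type bound
   [v* A v <= (|S| - 1) |v|^2] and [v* K v >= (d_k - (|S| - 1)) |v|^2 = c |v|^2]. *)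

Section SortedCount.
Variables (T : Type) (leT : rel T).
Hypotheses (leT_refl : reflexive leT) (leT_tr : transitive leT).

Lemma count_le_nth_sorted x0 s k : sorted leT s -> (k < size s)%N ->
  (k.+1 <= count (leT^~ (nth x0 s k)) s)%N.
Proof.
move=> s_sorted ks; rewrite -[X in count _ X](cat_take_drop k.+1 s) count_cat.
suff : all (leT^~ (nth x0 s k)) (take k.+1 s).
  by rewrite all_count => /eqP->; rewrite size_takel // leq_addr.
apply/(all_nthP x0) => i; rewrite size_takel // ltnS => ik.
rewrite nth_take ?ltnS //; apply: sorted_leq_nth => //; rewrite inE.
exact: leq_ltn_trans ks.
Qed.

Lemma count_ge_nth_sorted x0 s k : sorted leT s ->
  (size s - k <= count (leT (nth x0 s k)) s)%N.
Proof.
move=> s_sorted; rewrite -[X in count _ X](cat_take_drop k s) count_cat.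
suff : all (leT (nth x0 s k)) (drop k s).
  by rewrite all_count => /eqP->; rewrite size_drop leq_addl.
apply/(all_nthP x0) => i; rewrite size_drop => iks; rewrite nth_drop.
apply: sorted_leq_nth; rewrite ?inE ?leq_addr //=; lia.
Qed.

End SortedCount.

Lemma count_enum_card (T : finType) (p : pred T) : count p (enum T) = #|p|.
Proof.
rewrite cardE /enum_mem size_filter count_filter.
by apply: eq_count => x; rewrite !inE andbT.
Qed.

Lemma exists_subset_card (T : finType) (A : {pred T}) m :
  (m <= #|A|)%N -> exists2 S : {set T}, #|S| = m & {subset S <= A}.
Proof.
case/card_geqP => s [s_uniq s_size sA]; exists [set x in s].
  by rewrite cardsE (card_uniqP s_uniq).
by move=> x; rewrite inE => /sA.
Qed.

Lemma nconnC n (E : quiver n) i j : nconn E i j = nconn E j i.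
Proof. by apply: eq_count => e; rewrite orbC. Qed.

Lemma kirchhoff_mx_sym (R : nzRingType) n (E : quiver n) :
  (kirchhoff_mx R E)^T = kirchhoff_mx R E.
Proof. by apply/matrixP => i j; rewrite !mxE eq_sym nconnC; case: eqP => // ->. Qed.

Lemma map_kirchhoff_mx (R S : nzRingType) (f : {rmorphism R -> S}) n (E : quiver n) :
  map_mx f (kirchhoff_mx R E) = kirchhoff_mx S E.
Proof.
apply/matrixP => i j; rewrite !mxE rmorphB /=.
by case: eqP => _; rewrite ?rmorph0 ?rmorph_nat.
Qed.

Lemma nconn_row_sum_le n (E : quiver n) (S : {set 'I_n}) i :
  no_multiple_connections E -> i \in S ->
  (\sum_(j in S | j != i) nconn E i j <= #|S|.-1)%N.
Proof.
move=> E_simple iS; rewrite (cardsD1 i S) iS add1n /= -sum1_card.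
rewrite (eq_bigl (fun j => (j \in S) && (j != i)) (fun=> 1%N)) => [|j]; last first.
  by rewrite in_setD1 andbC.
by apply: leq_sum => j /andP[_ ji]; apply: E_simple; rewrite eq_sym.
Qed.

Lemma char_poly_similar (F : fieldType) n (P A : 'M[F]_n) :
  P \in unitmx -> char_poly (invmx P *m A *m P) = char_poly A.
Proof.
move=> Pu; rewrite /char_poly /char_poly_mx.
set Q := map_mx polyC P; set Qi := map_mx polyC (invmx P).
have QiQ : Qi *m Q = 1%:M by rewrite -map_mxM mulVmx // map_mx1.
rewrite !map_mxM -/Q -/Qi.
transitivity (\det (Qi *m ('X%:M - map_mx polyC A) *m Q)).
  congr (\det _); rewrite mulmxBr mulmxBl; congr (_ - _).
  by rewrite scalar_mxC -mulmxA QiQ mulmx1.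
by rewrite !det_mulmx mulrAC -det_mulmx QiQ det1 mul1r.
Qed.

Lemma real_symmetric_spectral (R : rcfType) n (K : 'M[R]_n) (s : seq R) :
  K^T = K -> char_poly K = \prod_(x <- s) ('X - x%:P) ->
  exists2 P : 'M[R[i]]_n, P \is unitarymx &
    exists2 D : 'rV_n, K ^ (real_complex R) = P^t* *m diag_mx D *m P &
      perm_eq (map (real_complex R) s) [seq D 0 j | j <- enum 'I_n].
Proof.
move=> KT cK; set Kc := K ^ real_complex R.
have Kc_normal : Kc \is normalmx.
  suff KcT : Kc^t* = Kc by rewrite qualifE KcT.
  apply/matrixP => i j; rewrite !mxE -[in LHS]KT mxE.
  by apply: conj_Creal; apply/complex_realP; exists (K i j).
have P_unitary := spectral_unitarymx Kc.
have KcE := orthomx_spectralP Kc_normal.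
set P := spectralmx Kc in P_unitary KcE *; set D := spectral_diag Kc in KcE *.
exists P => //; exists D; first by rewrite -invmx_unitary.
apply: prod_XsubC_eq.
rewrite big_map -(eq_bigr _ (fun x _ => map_polyXsubC (real_complex R) x)).
rewrite -rmorph_prod -cK /= map_char_poly -/Kc KcE.
rewrite char_poly_similar ?unitarymx_unit // char_poly_trig ?diag_mx_is_trig //.
by rewrite big_map big_enum /=; apply: eq_bigr => i _; rewrite mxE eqxx.
Qed.

Lemma rowsub_unitarymx (C : numClosedFieldType) m n (f : 'I_m -> 'I_n) (P : 'M[C]_n) :
  injective f -> P \is unitarymx -> rowsub f P \is unitarymx.
Proof.
move=> f_inj P_unitary; apply/unitarymxP.
rewrite rowsubE trmx_mul map_mxM mulmxA mulmxtVK // -rowsubE.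
by apply/matrixP => i j; rewrite !mxE (inj_eq f_inj) /= conjC_nat eq_sym.
Qed.

Lemma submx_rowsub_enum_supp (F : fieldType) n (A : {set 'I_n}) (v : 'rV[F]_n) :
  (v <= rowsub (@enum_val _ (mem A)) 1%:M)%MS -> forall j, j \notin A -> v 0 j = 0.
Proof.
move=> /submxP[b ->] j jA; rewrite mxE; apply: big1 => t _; rewrite !mxE.
case: eqP => [jE|]; last by rewrite mulr0.
by have := enum_valP t; rewrite jE (negPf jA).
Qed.

Lemma unitarymx1 (C : numClosedFieldType) n : (1%:M : 'M[C]_n) \is unitarymx.
Proof. by apply/unitarymxP; rewrite trmx1 map_mx1 mulmx1. Qed.

Lemma unitary_common_support (C : numClosedFieldType) n (P : 'M[C]_n)
    (J S : {set 'I_n}) :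
  P \is unitarymx -> (n < #|J| + #|S|)%N ->
  exists2 a : 'rV[C]_n, a != 0 &
    (forall j, j \notin J -> a 0 j = 0) /\ (forall i, i \notin S -> (a *m P) 0 i = 0).
Proof.
move=> P_unitary card_JS.
pose eJ := @enum_val _ (mem J); pose eS := @enum_val _ (mem S).
pose W := rowsub eJ P; pose V := rowsub eS (1%:M : 'M[C]_n).
have rkW : \rank W = #|J|.
  by apply/mxrank_unitary/rowsub_unitarymx => //; exact: enum_val_inj.
have rkV : \rank V = #|S|.
  by apply/mxrank_unitary/rowsub_unitarymx; [exact: enum_val_inj | exact: unitarymx1].
have /rowV0Pn[v] : (W :&: V)%MS != 0.
  rewrite -mxrank_eq0 -lt0n; have := mxrank_sum_cap W V.
  have := rank_leq_col (W + V)%MS; lia.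
rewrite sub_capmx => /andP[/submxP[b vE] vV] v_neq0.
pose a := b *m rowsub eJ 1%:M.
have avE : a *m P = v by rewrite vE /a -mulmxA -rowsubE.
exists a; first by apply: contraNneq v_neq0 => a0; rewrite -avE a0 mul0mx.
split; last by rewrite avE; exact: submx_rowsub_enum_supp.
by apply: submx_rowsub_enum_supp; rewrite submxMl.
Qed.

Section HermitianForm.
Variables (C : numClosedFieldType) (n : nat).
Implicit Types (M P : 'M[C]_n) (u : 'rV[C]_n) (D : 'rV[C]_n).

Definition hform M u : C := (u *m M *m u^t*) 0 0.

Lemma hformE M u : hform M u = \sum_i \sum_j u 0 i * M i j * (u 0 j)^*.
Proof.
rewrite /hform mxE.
rewrite (eq_bigr (fun j => \sum_i u 0 i * M i j * (u 0 j)^*)) => [|j _].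
  by rewrite exchange_big.
by rewrite !mxE mulr_suml; apply: eq_bigr => i _.
Qed.

Lemma hform_unitary P M u : P \is unitarymx ->
  hform (P^t* *m M *m P) (u *m P) = hform M u.
Proof.
by move=> P_unitary; rewrite /hform trmx_mul map_mxM !mulmxA !mulmxtVK.
Qed.

Lemma hform_diag D u : hform (diag_mx D) u = \sum_i D 0 i * (u 0 i * (u 0 i)^*).
Proof.
rewrite /hform mul_mx_diag mxE; apply: eq_bigr => i _.
by rewrite !mxE mulrAC mulrC.
Qed.

Lemma hform_diag_lt D u c : u != 0 -> (forall i, u 0 i != 0 -> D 0 i < c) ->
  hform (diag_mx D) u < c * hform 1%:M u.
Proof.
move=> u_neq0 D_lt; have [i0 ui0] : exists i, u 0 i != 0.
  apply/existsP; apply: contraR u_neq0 => /existsPn u0.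
  by apply/eqP/rowP => i; rewrite mxE; apply/eqP/negPn.
rewrite -diag_const_mx !hform_diag -subr_gt0 mulr_sumr -sumrB (bigD1 i0) //=.
apply: ltr_pwDl; first by rewrite mxE mul1r -mulrBl mulr_gt0 ?mul_conjC_gt0 ?subr_gt0 ?D_lt.
apply: sumr_ge0 => i _; rewrite mxE mul1r -mulrBl.
have [-> | ui] := eqVneq (u 0 i) 0; first by rewrite mul0r mulr0.
by rewrite mulr_ge0 ?mul_conjC_ge0 // subr_ge0 ltW ?D_lt.
Qed.

Lemma hform1_unitary P u :
  P \is unitarymx -> hform 1%:M (u *m P) = hform 1%:M u.
Proof.
move=> P_unitary; have PtP : P^t* *m 1%:M *m P = 1%:M.
  by rewrite mulmx1 -[X in _ *m X]trmxCK; apply/unitarymxP; rewrite trmxC_unitary.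
by rewrite -[in LHS]PtP hform_unitary.
Qed.

End HermitianForm.

Lemma sym_nonneg_form_le (C : numClosedFieldType) n (N : 'M[C]_n) (a : 'I_n -> C) :
  (forall i j, 0 <= N i j) -> (forall i j, N i j = N j i) ->
  \sum_i \sum_j N i j * (a i * (a j)^*) <= \sum_i (\sum_j N i j) * (a i * (a i)^*).
Proof.
move=> N_ge0 N_sym.
have swap (F : 'I_n -> 'I_n -> C) :
    \sum_i \sum_j N i j * F j i = \sum_i \sum_j N i j * F i j.
  by rewrite exchange_big; apply: eq_bigr => i _; apply: eq_bigr => j _; rewrite N_sym.
have swap_diag : \sum_i \sum_j N i j * (a j * (a j)^*) = \sum_i \sum_j N i j * (a i * (a i)^*).
  exact: swap (fun i _ => a i * (a i)^*).
have swap_mixed : \sum_i \sum_j N i j * (a j * (a i)^*) = \sum_i \sum_j N i j * (a i * (a j)^*).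
  exact: swap (fun i j => a i * (a j)^*).
(* [\sum_(i, j) N i j |a i - a j|^2 >= 0] is twice the difference of the two sides. *)
have : 0 <= \sum_i \sum_j N i j * ((a i - a j) * (a i - a j)^*).
  by apply: sumr_ge0 => i _; apply: sumr_ge0 => j _; rewrite mulr_ge0 ?mul_conjC_ge0.
have -> : \sum_i \sum_j N i j * ((a i - a j) * (a i - a j)^*) =
    (\sum_i \sum_j N i j * (a i * (a i)^*) + \sum_i \sum_j N i j * (a j * (a j)^*))
    - (\sum_i \sum_j N i j * (a i * (a j)^*) + \sum_i \sum_j N i j * (a j * (a i)^*)).
  rewrite -!big_split -sumrB; apply: eq_bigr => i _.
  rewrite -!big_split -sumrB /=; apply: eq_bigr => j _.
  by rewrite rmorphB /=; ring.
rewrite swap_diag swap_mixed subr_ge0 -!mulr2n ler_pMn2r // => /le_trans; apply.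
by under [X in _ <= X]eq_bigr do rewrite mulr_suml.
Qed.

Lemma hform_kirchhoff_ge (C : numClosedFieldType) n (E : quiver n) (S : {set 'I_n})
    d (u : 'rV[C]_n) :
  no_multiple_connections E -> {in S, forall i, d <= degree E i}%N ->
  (forall i, i \notin S -> u 0 i = 0) ->
  (d%:R - (#|S|.-1)%:R) * hform 1%:M u <= hform (kirchhoff_mx C E) u.
Proof.
move=> E_simple S_deg u_supp.
pose N : 'M[C]_n := \matrix_(i, j)
  (if [&& i \in S, j \in S & i != j] then (nconn E i j)%:R else 0).
pose w i := u 0 i * (u 0 i)^*.
have entryE i j : u 0 i * kirchhoff_mx C E i j * (u 0 j)^* =
    (i == j)%:R * ((degree E i)%:R * w i) - N i j * (u 0 i * (u 0 j)^*).
  rewrite /w !mxE; have [<-|ij] := eqVneq i j; first by rewrite !andbF /=; ring.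
  rewrite /= andbT; case: ifPn => [_|]; first by ring.
  by rewrite negb_and => /orP[] /u_supp ->; rewrite ?conjC0; ring.
have formE : hform (kirchhoff_mx C E) u =
    \sum_i (degree E i)%:R * w i - \sum_i \sum_j N i j * (u 0 i * (u 0 j)^*).
  rewrite hformE -sumrB; apply: eq_bigr => i _.
  under eq_bigr do rewrite entryE.
  rewrite sumrB (bigD1 i) //= eqxx mul1r big1 ?addr0 // => j.
  by rewrite eq_sym => /negPf->; rewrite mul0r.
have N_ge0 i j : 0 <= N i j by rewrite mxE; case: ifP.
have N_sym i j : N i j = N j i by rewrite !mxE nconnC [j == i]eq_sym andbCA.
have N_row_le i : i \in S -> \sum_j N i j <= (#|S|.-1)%:R.
  move=> iS; suff -> : \sum_j N i j = (\sum_(j in S | j != i) nconn E i j)%:R.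
    by rewrite ler_nat nconn_row_sum_le.
  rewrite natr_sum [RHS]big_mkcond /=; apply: eq_bigr => j _.
  by rewrite mxE iS [i == j]eq_sym; case: ifP.
rewrite formE -diag_const_mx hform_diag.
apply: (le_trans _ (lerB (lexx _) (sym_nonneg_form_le (fun i => u 0 i) N_ge0 N_sym))).
rewrite mulr_sumr -sumrB; apply: ler_sum => i _; rewrite mxE mul1r -mulrBl.
have [ui0|ui0] := eqVneq (u 0 i) 0; first by rewrite /w ui0 !(mul0r, mulr0).
have iS : i \in S by apply: contraR ui0 => /u_supp ->.
by rewrite ler_wpM2r ?mul_conjC_ge0 // lerB ?ler_nat ?S_deg ?N_row_le.
Qed.

Lemma card_spectrum_lt (R : rcfType) n (D : 'rV[R[i]]_n) (lam : seq R) k c :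
  sorted <=%R lam -> perm_eq (map (real_complex R) lam) [seq D 0 j | j <- enum 'I_n] ->
  (k < size lam)%N -> lam`_k < c ->
  (k.+1 <= #|[set j | (D 0 j < real_complex R c)%R]|)%N.
Proof.
move=> lam_sorted permD k_lt lam_lt_c.
have := @count_le_nth_sorted _ _ lexx le_trans 0 lam k lam_sorted k_lt.
move/leq_trans; apply; apply: (@leq_trans (count (fun x => x < c) lam)).
  by apply: sub_count => x /= /le_lt_trans; apply.
rewrite (@eq_count _ _ (preim (real_complex R) (<%R^~ (real_complex R c)))).
  by rewrite -count_map (permP permD) count_map count_enum_card cardsE.
by move=> x /=; rewrite ltcR.
Qed.

Lemma high_degree_set n (E : quiver n) k :
  exists2 S : {set 'I_n}, #|S| = (n - k)%N &
    {in S, forall i, nth 0%N (sorted_degrees E) k <= degree E i}%N.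
Proof.
apply: exists_subset_card; rewrite -count_enum_card.
rewrite -(count_map (degree E) (leq _)) -(permP (permEl (perm_sort leq _))).
have := @count_ge_nth_sorted _ _ leqnn leq_trans 0%N (sorted_degrees E) k.
rewrite size_sort size_map size_enum_ord; apply.
exact/sort_sorted/leq_total.
Qed.

Theorem theorem2 (R : realType) (n : nat) (E : quiver n) (lam : seq R) :
  (0 < n)%N ->
  no_multiple_connections E ->
  sorted_eigenvalues (kirchhoff_mx R E) lam ->
  forall k : nat, (k < n)%N ->
    (nth 0%N (sorted_degrees E) k)%:R - (n - k.+1)%:R <= lam`_k.
Proof.
move=> _ E_simple [lam_sorted charK] k kn.
set dk := nth 0%N _ k; set c : R := _ - _.
have [P P_unitary [D KE permD]] := real_symmetric_spectral (kirchhoff_mx_sym R E) charK.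
rewrite map_kirchhoff_mx in KE.
have size_lam : size lam = n.
  by have := size_char_poly (kirchhoff_mx R E); rewrite charK size_prod_XsubC; case.
rewrite leNgt; apply/negP => lam_lt_c.
pose J := [set j | D 0 j < real_complex R c].
have card_J : (k.+1 <= #|J|)%N.
  by apply: card_spectrum_lt lam_sorted permD _ lam_lt_c; rewrite size_lam.
have [S card_S S_deg] := high_degree_set E k.
have card_JS : (n < #|J| + #|S|)%N by rewrite card_S; lia.
have [a a_neq0 [a_supp aP_supp]] := unitary_common_support P_unitary card_JS.
have D_lt i : a 0 i != 0 -> D 0 i < real_complex R c.
  move=> ai; suff : i \in J by rewrite inE.
  by apply: contraR ai => /a_supp ->.
suff : real_complex R c * hform 1%:M a <= hform (diag_mx D) a.
  by rewrite lt_geF // hform_diag_lt.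
have -> : real_complex R c = dk%:R - (#|S|.-1)%:R.
  by rewrite card_S -subnS rmorphB /= !rmorph_nat.
rewrite -(hform_unitary (diag_mx D) _ P_unitary) -KE -(hform1_unitary _ P_unitary).
exact: hform_kirchhoff_ge.
Qed.
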